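(* Let $\phi:\mathcal M_1\to\mathcal M_2$ be a homomorphism of local Moufang sets, with $\mathcal M_1=(X,(U_x))$, and let $\theta_x:U_x\to V_{x\phi}$ ($x\in X$) be the induced group homomorphisms. The following are equivalent: (i) $\phi$ is surjective; (ii) $\theta_x$ is surjective for all $x\in X$; (iii) $\theta_x$ is surjective for some $x\in X$.
   Context: Group actions are right actions; maps are composed left to right, so $u\phi$ means first $u$ then $\phi$. For $(X,\sim)$, $\overline x$ is the class of $x$, $\overline X$ the set of classes, $\mathrm{Sym}(X,\sim)$ the bijections $g$ with $x\sim y\iff xg\sim yg$, $\overline U$ the induced group on $\overline X$. A local Moufang set is $(X,\sim)$ with $|\overline X|>2$ and subgroups $U_x\le\mathrm{Sym}(X,\sim)$ ($x\in X$) with: (LM0) $x\sim y\Rightarrow\overline{U_x}=\overline{U_y}$; (LM1) $U_x$ fixes $x$ and is sharply transitive on $X\setminus\overline x$; (LM1') $\overline{U_x}$ fixes $\overline x$ and is sharply transitive on $\overline X\setminus\{\overline x\}$; (LM2) $U_x^g=U_{xg}$ for all $x$ and all $g\in\langle U_y\rangle$, where $g^h=h^{-1}gh$. A homomorphism $\mathcal M_1=(X,(U_x))\to\mathcal M_2=(Y,(V_y))$ is a map $\phi:X\to Y$ such that $x\sim x'\iff x\phi\sim x'\phi$ for all $x,x'\in X$, and $U_x\phi\subseteq\phi V_{x\phi}$ for all $x$. For each $x\in X$ the induced map $\theta_x:U_x\to V_{x\phi}$ is the unique map with $u\phi=\phi\,\theta_x(u)$ for all $u\in U_x$ (it exists and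 is a group homomorphism). *)

(* Maps act on the right in the paper; here a permutation is a function
   X -> X and "x g" is written (g x).  The product "g h" (first g, then h)
   is the function (fun z => h (g z)). *)
From Stdlib Require Import Classical FunctionalExtensionality.

Set Implicit Arguments.

Section Defs.
Variable X : Type.

Definition bij (f : X -> X) : Prop :=
  exists g : X -> X, (forall z, g (f z) = z) /\ (forall z, f (g z) = z).

Definition in_Sym (sim : X -> X -> Prop) (g : X -> X) : Prop :=
  bij g /\ forall x y, sim x y <-> sim (g x) (g y).

Definition is_subgroup (H : (X -> X) -> Prop) : Prop :=
  H (fun z => z) /\
  (forall g h, H g -> H h -> H (fun z => h (g z))) /\
  (forall g, H g -> exists g', H g' /\ (forall z, g' (g z) = z) /\ (forall z, g (g' z) = z)).

Inductive gen (U : X -> (X -> X) -> Prop) : (X -> X) -> Prop :=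
| gen_id : gen U (fun z => z)
| gen_U : forall y u, U y u -> gen U u
| gen_comp : forall g h, gen U g -> gen U h -> gen U (fun z => h (g z))
| gen_inv : forall g g', gen U g -> (forall z, g' (g z) = z) ->
            (forall z, g (g' z) = z) -> gen U g'.

End Defs.

Record LocalMoufangSet (X : Type) := {
  sim : X -> X -> Prop;
  U : X -> (X -> X) -> Prop;
  sim_equiv : (forall x, sim x x) /\ (forall x y, sim x y -> sim y x) /\
              (forall x y z, sim x y -> sim y z -> sim x z);
  three_classes : exists a b c : X, ~ sim a b /\ ~ sim a c /\ ~ sim b c;
  U_subgroup : forall x, is_subgroup (U x);
  U_in_Sym : forall x u, U x u -> in_Sym sim u;
  (* (LM0): x ~ y  ->  overline(U_x) = overline(U_y) as groups on X/~ *)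
  LM0 : forall x y, sim x y ->
        (forall u, U x u -> exists v, U y v /\ forall z, sim (u z) (v z)) /\
        (forall v, U y v -> exists u, U x u /\ forall z, sim (u z) (v z));
  LM1_fix : forall x u, U x u -> u x = x;
  LM1_trans : forall x y z, ~ sim x y -> ~ sim x z ->
              exists u, U x u /\ u y = z /\
                        forall u', U x u' -> u' y = z -> u' = u;
  (* (LM1'): overline(U_x) fixes class(x) and is sharply transitive on
     (X/~) \ {class(x)}; elements of overline(U_x) are the maps induced
     on classes, two u, u' inducing the same map iff u z ~ u' z for all z *)
  LM1'_fix : forall x u, U x u -> sim (u x) x;
  LM1'_trans : forall x y z, ~ sim x y -> ~ sim x z ->
              exists u, U x u /\ sim (u y) z /\
                        forall u', U x u' -> sim (u' y) z ->
                                   forall w, sim (u' w) (u w);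
  (* (LM2): U_x^g = U_{xg} for all g in <U_y | y in X>, where
     u^g = g^-1 u g, i.e. (z g) u^g = (z u) g *)
  LM2 : forall g, gen U g -> forall x w,
        U (g x) w <-> exists u, U x u /\ forall z, w (g z) = g (u z)
}.

Definition is_hom (X Y : Type) (M1 : LocalMoufangSet X) (M2 : LocalMoufangSet Y)
    (phi : X -> Y) : Prop :=
  (forall x x', sim M1 x x' <-> sim M2 (phi x) (phi x')) /\
  (forall x u, U M1 x u -> exists v, U M2 (phi x) v /\ forall z, phi (u z) = v (phi z)).

(* theta_x u = v, i.e. u phi = phi v with u in U_x, v in V_{x phi}
   (the induced map theta_x : U_x -> V_{x phi}, as its graph) *)
Definition theta (X Y : Type) (M1 : LocalMoufangSet X) (M2 : LocalMoufangSet Y)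
    (phi : X -> Y) (x : X) (u : X -> X) (v : Y -> Y) : Prop :=
  U M1 x u /\ U M2 (phi x) v /\ forall z, phi (u z) = v (phi z).

Definition theta_surjective (X Y : Type) (M1 : LocalMoufangSet X) (M2 : LocalMoufangSet Y)
    (phi : X -> Y) (x : X) : Prop :=
  forall v, U M2 (phi x) v -> exists u, theta M1 M2 phi x u v.

(* By sharp transitivity, an element v of V_{xφ} is determined by one value
   v(aφ) with a ≁ x; if that value is some zφ, the u ∈ U_x with au = z has
   uφ = φv, so v = θ_x(u).  Conversely, if θ_x is onto then, V_{xφ} being
   transitive off the class of xφ, every point outside that class lies in the
   image of φ; this already makes θ_b onto for every b ≁ x, and θ_b then covers
   the class of xφ.  Since φ reflects ~ and there are three classes, one can
   always choose a point outside two prescribed classes. *)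
From Stdlib Require Import Classical.

Set Implicit Arguments.

Lemma sim_sym {Z : Type} {M : LocalMoufangSet Z} {x y : Z} : sim M x y -> sim M y x.
Proof. destruct (sim_equiv M) as [_ [Hsym _]]; exact (Hsym x y). Qed.

Lemma sim_trans {Z : Type} {M : LocalMoufangSet Z} {x y z : Z} :
  sim M x y -> sim M y z -> sim M x z.
Proof. destruct (sim_equiv M) as [_ [_ Htr]]; exact (Htr x y z). Qed.

Lemma sim_not_sym {Z : Type} {M : LocalMoufangSet Z} {x y : Z} :
  ~ sim M x y -> ~ sim M y x.
Proof. intros Hxy Hyx; exact (Hxy (sim_sym Hyx)). Qed.

Lemma root_elt_not_sim {Z : Type} {M : LocalMoufangSet Z} {x : Z} {v : Z -> Z} {y : Z} :
  U M x v -> ~ sim M x y -> ~ sim M x (v y).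
Proof.
  intros Hv Hxy Hxvy; apply Hxy.
  destruct (U_in_Sym M x v Hv) as [_ Hpres].
  apply Hpres; rewrite (LM1_fix M x v Hv); exact Hxvy.
Qed.

Section Homomorphism.
Variables (X Y : Type) (M1 : LocalMoufangSet X) (M2 : LocalMoufangSet Y) (phi : X -> Y).
Hypothesis phi_sim : forall x x', sim M1 x x' <-> sim M2 (phi x) (phi x').
Hypothesis phi_U : forall x u, U M1 x u ->
  exists v, U M2 (phi x) v /\ forall z, phi (u z) = v (phi z).

Lemma exists_point_off_two_classes b w : exists a, ~ sim M1 a b /\ ~ sim M2 (phi a) w.
Proof.
  destruct (three_classes M1) as [p [q [r [Hpq [Hpr Hqr]]]]].
  apply NNPP; intro Hnone.
  assert (Hcover : forall a, sim M1 a b \/ sim M2 (phi a) w).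
  { intro a; apply NNPP; intro H; apply Hnone; exists a; tauto. }
  assert (Hb : forall a c, sim M1 a b -> sim M1 c b -> sim M1 a c).
  { intros a c Ha Hc; exact (sim_trans Ha (sim_sym Hc)). }
  assert (Hw : forall a c, sim M2 (phi a) w -> sim M2 (phi c) w -> sim M1 a c).
  { intros a c Ha Hc; apply phi_sim; exact (sim_trans Ha (sim_sym Hc)). }
  destruct (Hcover p), (Hcover q), (Hcover r); eauto.
Qed.

Lemma theta_lift {x v a z} : U M2 (phi x) v -> ~ sim M1 x a ->
  v (phi a) = phi z -> exists u, theta M1 M2 phi x u v.
Proof.
  intros Hv Hxa Hvz.
  assert (Hxa2 : ~ sim M2 (phi x) (phi a)) by (rewrite <- phi_sim; exact Hxa).
  assert (Hxz2 : ~ sim M2 (phi x) (phi z))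
    by (rewrite <- Hvz; exact (root_elt_not_sim Hv Hxa2)).
  assert (Hxz : ~ sim M1 x z) by (rewrite phi_sim; exact Hxz2).
  destruct (LM1_trans M1 x a z Hxa Hxz) as [u [Hu [Hua _]]].
  destruct (phi_U _ _ Hu) as [v' [Hv' Hu_v']].
  destruct (LM1_trans M2 (phi x) (phi a) (phi z) Hxa2 Hxz2) as [w [_ [_ Hsharp]]].
  (* v and v' both send aφ to zφ, so sharp transitivity identifies them *)
  assert (Ev : v = w) by (apply Hsharp; assumption).
  assert (Ev' : v' = w) by (apply Hsharp; [assumption | rewrite <- Hu_v', Hua; reflexivity]).
  exists u; split; [exact Hu | split; [exact Hv |]].
  intro t; rewrite Hu_v', Ev, Ev'; reflexivity.
Qed.

Lemma theta_surjective_image {x y} : theta_surjective M1 M2 phi x ->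
  ~ sim M2 (phi x) y -> exists z, phi z = y.
Proof.
  intros Hth Hxy.
  destruct (exists_point_off_two_classes x (phi x)) as [a [Hax _]].
  assert (Hxa2 : ~ sim M2 (phi x) (phi a))
    by (rewrite <- phi_sim; exact (sim_not_sym Hax)).
  destruct (LM1_trans M2 _ _ _ Hxa2 Hxy) as [v [Hv [Hva _]]].
  destruct (Hth v Hv) as [u [_ [_ Hu_v]]].
  exists (u a); rewrite Hu_v; exact Hva.
Qed.

Lemma theta_surjective_not_sim {x b} : theta_surjective M1 M2 phi x ->
  ~ sim M1 b x -> theta_surjective M1 M2 phi b.
Proof.
  intros Hth Hbx v Hv.
  destruct (U_in_Sym M2 _ _ Hv) as [[vinv [_ Hv_vinv]] Hpres].
  destruct (exists_point_off_two_classes b (vinv (phi x))) as [a [Hab Haw]].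
  assert (Hxva : ~ sim M2 (phi x) (v (phi a))).
  { intro H; apply Haw, sim_sym; apply Hpres; rewrite Hv_vinv; exact H. }
  destruct (theta_surjective_image Hth Hxva) as [z Hz].
  exact (theta_lift Hv (sim_not_sym Hab) (eq_sym Hz)).
Qed.

Lemma surjective_theta_surjective {x} :
  (forall y, exists z, phi z = y) -> theta_surjective M1 M2 phi x.
Proof.
  intros Hsurj v Hv.
  destruct (exists_point_off_two_classes x (phi x)) as [a [Hax _]].
  destruct (Hsurj (v (phi a))) as [z Hz].
  exact (theta_lift Hv (sim_not_sym Hax) (eq_sym Hz)).
Qed.

Lemma theta_surjective_surjective x :
  theta_surjective M1 M2 phi x -> forall y, exists z, phi z = y.
Proof.
  intros Hth y.
  destruct (classic (sim M2 (phi x) y)) as [Hxy | Hxy];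
    [| exact (theta_surjective_image Hth Hxy)].
  destruct (exists_point_off_two_classes x (phi x)) as [b [Hbx _]].
  apply (theta_surjective_image (theta_surjective_not_sim Hth Hbx)).
  intro Hby; apply Hbx; apply phi_sim.
  exact (sim_trans Hby (sim_sym Hxy)).
Qed.

End Homomorphism.

Theorem mainTheorem10 (X Y : Type) (M1 : LocalMoufangSet X) (M2 : LocalMoufangSet Y)
    (phi : X -> Y) (hphi : is_hom M1 M2 phi) :
  ((forall y : Y, exists x : X, phi x = y) <-> (forall x : X, theta_surjective M1 M2 phi x)) /\
  ((forall x : X, theta_surjective M1 M2 phi x) <-> (exists x : X, theta_surjective M1 M2 phi x)).
Proof.
  destruct hphi as [phi_sim phi_U].
  destruct (three_classes M1) as [p _].
  split; split.
  - intros Hsurj x; exact (surjective_theta_surjective M1 M2 phi phi_sim phi_U Hsurj).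
  - intro Hall; exact (theta_surjective_surjective phi_sim phi_U (Hall p)).
  - intro Hall; exists p; exact (Hall p).
  - intros [x Hx] x'.
    apply (surjective_theta_surjective M1 M2 phi phi_sim phi_U).
    exact (theta_surjective_surjective phi_sim phi_U Hx).
Qed.
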